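(* Let $S_X,S_Y$ be finite nonempty action sets, $\lambda\in[0,1)$, and let $\varphi:S_X\times S_Y\to\mathbb{R}$ be additive. If $\varphi\equiv0$ is $\lambda$-enforceable by $X$, then $\varphi\equiv0$ is $\lambda$-enforceable by $X$ using a reactive strategy, i.e., there exist $\sigma_X^0\in\Delta(S_X)$ and $\sigma_X:S_Y\to\Delta(S_X)$ such that the reactive strategy $(\sigma_X^0,\sigma_X)$ is $(\varphi,\lambda)$-autocratic.
   Context: Two players $X,Y$ play a repeated game with finite action sets $S_X,S_Y$; $\Delta(S)$ denotes the probability distributions on $S$. $\varphi$ is additive if there are $\phi_X:S_X\to\mathbb{R}$ and $\phi_Y:S_Y\to\mathbb{R}$ with $\varphi(s_X,s_Y)=\phi_X(s_X)+\phi_Y(s_Y)$ for all $s_X,s_Y$. Histories: $\mathcal{H}=\bigcup_{T\ge0}(S_X\times S_Y)^T$. A behavioral strategy for $X$ is a map $\sigma_X:\mathcal{H}\to\Delta(S_X)$, similarly for $Y$; in each round $t$ players independently draw actions from their strategies evaluated at the history of realized action pairs of rounds $0,\dots,t-1$, and $\mathbb{E}_{\sigma_X,\sigma_Y}$ is the expectation over the resulting play. For $\lambda\in[0,1)$, $\sigma_X$ is $(\varphi,\lambda)$-autocratic if for every behavioral strategy $\sigma_Y$ of $Y$, $\mathbb{E}_{\sigma_X,\sigma_Y}\big[(1-\lambda)\sum_{t\ge0}\lambda^t\varphi(s_X^t,s_Y^t)\big]=0$; $\varphi\equiv0$ is $\lambda$-enforceable by $X$ if a $(\varphi,\lambda)$-autocratic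 behavioral strategy for $X$ exists. A reactive strategy $(\sigma_X^0,\sigma_X)$ with $\sigma_X^0\in\Delta(S_X)$, $\sigma_X:S_Y\to\Delta(S_X)$ plays the mixed action $\sigma_X^0$ in round $0$ and $\sigma_X[s_Y^t]$ in round $t+1$, where $s_Y^t$ is $Y$'s realized action in round $t$. *)

From HB Require Import structures.
From mathcomp Require Import all_boot all_order all_algebra.
From mathcomp Require Import all_classical all_reals.
From mathcomp Require Import all_analysis.
Set Implicit Arguments. Unset Strict Implicit. Unset Printing Implicit Defensive.
Import Order.TTheory GRing.Theory Num.Theory numFieldNormedType.Exports.
Local Open Scope classical_set_scope.
Local Open Scope ring_scope.

Section RepeatedGame.
Variables (R : realType) (SX SY : finType).

Definition is_dist (S : finType) (p : S -> R) : Prop :=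
  (forall s, 0 <= p s) /\ \sum_(s : S) p s = 1.

(* Histories: finite sequences of realized action pairs, oldest first. *)
Definition hist := seq (SX * SY).

Definition stratX := hist -> SX -> R.
Definition stratY := hist -> SY -> R.
Definition is_stratX (s : stratX) : Prop := forall h, is_dist (s h).
Definition is_stratY (s : stratY) : Prop := forall h, is_dist (s h).

Definition hist_prob (sX : stratX) (sY : stratY) (t : nat)
  (h : t.-tuple (SX * SY)) : R :=
  \prod_(i < t) (sX (take i h) (tnth h i).1 * sY (take i h) (tnth h i).2).

Definition stage_exp (sX : stratX) (sY : stratY) (phi : SX -> SY -> R)
  (t : nat) : R :=
  \sum_(h : t.-tuple (SX * SY)) hist_prob sX sY h *
     \sum_(x : SX) \sum_(y : SY) sX h x * sY h y * phi x y.

(* Expected discounted payoff E[(1-lam) sum_t lam^t phi(s^t)]: since phi is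
   bounded, it is the sum of the series of expected discounted stage values. *)
Definition disc_term (sX : stratX) (sY : stratY) (phi : SX -> SY -> R)
  (lam : R) (t : nat) : R :=
  (1 - lam) * lam ^+ t * stage_exp sX sY phi t.

Definition autocratic (phi : SX -> SY -> R) (lam : R) (sX : stratX) : Prop :=
  forall sY : stratY, is_stratY sY ->
    series (disc_term sX sY phi lam) @ \oo --> (0 : R).

Definition enforceable (phi : SX -> SY -> R) (lam : R) : Prop :=
  exists sX : stratX, is_stratX sX /\ autocratic phi lam sX.

Definition additive_game (phi : SX -> SY -> R) : Prop :=
  exists (phiX : SX -> R) (phiY : SY -> R),
    forall x y, phi x y = phiX x + phiY y.

Definition reactive (s0 : SX -> R) (s : SY -> SX -> R) : stratX :=
  fun h => if h is p :: h' then s (last p h').2 else s0.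

End RepeatedGame.

(* Write phi x y = phiX x + phiY y and let v be the mean of phiX under the first
   mixed action of an autocratic strategy.  Against a Y who plays a fixed y
   forever, the vanishing discounted payoff is
   (1 - lam) (v + phiY y) + sum_(t >= 1) (1 - lam) lam^t (E_t[phiX] + phiY y),
   and bounding E_t[phiX] between min phiX and max phiX yields
   (1 - lam) v + phiY y + lam min phiX <= 0 <= (1 - lam) v + phiY y + lam max phiX.
   Hence every y admits a mixed action sigma(y) with
   lam E_sigma(y)[phiX] + phiY y = -(1 - lam) v.  For the reactive strategy that
   opens like the autocratic one and answers y with sigma(y), lam times X's
   expected term in round t+1 cancels Y's term in round t, so the N-th partial
   sum of the discounted payoff is lam^N times a bounded quantity. *)

From mathcomp Require Import all_boot all_order all_algebra.
From mathcomp Require Import all_classical all_reals all_analysis.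
From mathcomp Require Import ring lra.
Set Implicit Arguments.
Unset Strict Implicit.
Unset Printing Implicit Defensive.
Import Order.TTheory GRing.Theory Num.Theory numFieldNormedType.Exports.
Local Open Scope classical_set_scope.
Local Open Scope ring_scope.

Lemma sum_tuple_cons (V : nmodType) (T : finType) n (G : n.+1.-tuple T -> V) :
  \sum_(h : n.+1.-tuple T) G h = \sum_(q : T) \sum_(h : n.-tuple T) G [tuple of q :: h].
Proof.
rewrite pair_big /= (reindex (fun p : T * n.-tuple T => [tuple of p.1 :: p.2])) //=.
exists (fun h : n.+1.-tuple T => (thead h, [tuple of behead h])).
  by move=> [q h] _ /=; rewrite theadE; congr pair; apply: val_inj.
by move=> h _; rewrite [RHS]tuple_eta.
Qed.

Section Means.
Context {R : realType}.
Implicit Types (S T : finType).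

Definition mean S (p f : S -> R) : R := \sum_s p s * f s.

Definition prod_dist S T (p : S -> R) (q : T -> R) : S * T -> R :=
  fun r => p r.1 * q r.2.

Lemma mean_bound S (p f : S -> R) lo hi : is_dist p ->
  (forall s, lo <= f s <= hi) -> lo <= mean p f <= hi.
Proof.
move=> [p_ge0 p_sum1] f_bnd; rewrite -[lo]mul1r -[hi]mul1r -p_sum1 !big_distrl.
by apply/andP; split; apply: ler_sum => s _; apply: ler_wpM2l => //;
  case/andP: (f_bnd s).
Qed.

Lemma mean_cst S (p : S -> R) c : is_dist p -> mean p (fun=> c) = c.
Proof. by move=> [_ p_sum1]; rewrite /mean -big_distrl /= p_sum1 mul1r. Qed.

Lemma meanB S (p f g : S -> R) :
  mean p (fun s => f s - g s) = mean p f - mean p g.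
Proof. by rewrite /mean -sumrB; apply: eq_bigr => s _; rewrite mulrBr. Qed.

Lemma mean_cstB S (p f : S -> R) c : is_dist p ->
  mean p (fun s => c - f s) = c - mean p f.
Proof. by move=> p_dist; rewrite meanB mean_cst. Qed.

Lemma meanZ S (p f : S -> R) c : mean p (fun s => c * f s) = c * mean p f.
Proof. by rewrite /mean big_distrr; apply: eq_bigr => s _; rewrite mulrCA. Qed.

Lemma is_dist_prod S T (p : S -> R) (q : T -> R) :
  is_dist p -> is_dist q -> is_dist (prod_dist p q).
Proof.
move=> [p_ge0 p_sum1] [q_ge0 q_sum1]; split=> [r|]; first exact: mulr_ge0.
rewrite -(pair_bigA _ (fun s t => p s * q t)) /= -[RHS]p_sum1.
by apply: eq_bigr => s _; rewrite -big_distrr /= q_sum1 mulr1.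
Qed.

Lemma mean_prod S T (p : S -> R) (q : T -> R) (f : S -> R) (g : T -> R) :
  is_dist p -> is_dist q ->
  mean (prod_dist p q) (fun r => f r.1 + g r.2) = mean p f + mean q g.
Proof.
move=> [_ p_sum1] [_ q_sum1].
rewrite /mean -(pair_bigA _ (fun s t => p s * q t * (f s + g t))) /=.
transitivity (\sum_s (p s * f s + p s * \sum_t q t * g t)).
  apply: eq_bigr => s _; rewrite -[p s * f s]mulr1 -q_sum1 !big_distrr -big_split /=.
  by apply: eq_bigr => t _; ring.
by rewrite big_split /= -big_distrl /= p_sum1 mul1r.
Qed.

Lemma mean_prod_snd S T (p : S -> R) (q : T -> R) (g : T -> R) :
  is_dist p -> is_dist q -> mean (prod_dist p q) (fun r => g r.2) = mean q g.
Proof.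
move=> p_dist q_dist; have := mean_prod (fun=> 0) g p_dist q_dist.
by rewrite mean_cst // add0r; under eq_fun do rewrite add0r.
Qed.

Lemma mean_prodE S T (p : S -> R) (q : T -> R) (F : S -> T -> R) :
  mean (prod_dist p q) (fun r => F r.1 r.2) = \sum_s \sum_t p s * q t * F s t.
Proof. by rewrite /mean -(pair_bigA _ (fun s t => p s * q t * F s t)). Qed.

Definition point_mass S (s0 : S) : S -> R := fun s => (s == s0)%:R.

Lemma is_dist_point_mass S (s0 : S) : is_dist (point_mass s0).
Proof.
split=> [s|]; first by rewrite ler0n.
by rewrite (bigD1 s0) //= /point_mass eqxx big1 ?addr0 // => s /negbTE ->.
Qed.

Lemma mean_point_mass S (s0 : S) f : mean (point_mass s0) f = f s0.
Proof.
rewrite /mean (bigD1 s0) //= /point_mass eqxx mul1r big1 ?addr0 // => s /negbTE ->.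
by rewrite mul0r.
Qed.

Lemma exists_dist_mean S (f : S -> R) s1 s2 c :
  f s1 <= c <= f s2 -> exists p, is_dist p /\ mean p f = c.
Proof.
case/andP=> f1c cf2.
have [f12|f21] := ltrP (f s1) (f s2); last first.
  exists (point_mass s1); split; first exact: is_dist_point_mass.
  by rewrite mean_point_mass; apply/eqP; rewrite eq_le f1c (le_trans cf2).
pose th := (c - f s1) / (f s2 - f s1).
have th_ge0 : 0 <= th by rewrite divr_ge0 ?subr_ge0 // ltW.
have th_le1 : th <= 1 by rewrite ler_pdivrMr ?subr_gt0 // mul1r lerD2r.
exists (fun s => th * point_mass s2 s + (1 - th) * point_mass s1 s); split.
  have [p2_ge0 p2_sum1] := is_dist_point_mass s2.
  have [p1_ge0 p1_sum1] := is_dist_point_mass s1.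
  split=> [s|]; first by rewrite addr_ge0 // mulr_ge0 // subr_ge0.
  by rewrite big_split /= -!big_distrr /= p2_sum1 p1_sum1 !mulr1 addrC subrK.
rewrite /mean; under eq_bigr do rewrite mulrDl -!mulrA.
rewrite big_split /= -!big_distrr /=.
rewrite -/(mean (point_mass s2) f) -/(mean (point_mass s1) f) !mean_point_mass /th.
by field; rewrite subr_eq0 gt_eqF.
Qed.

Lemma exists_dist_affine_root S (f : S -> R) lam c s1 s2 : 0 <= lam ->
  c + lam * f s1 <= 0 <= c + lam * f s2 ->
  exists p, is_dist p /\ lam * mean p f + c = 0.
Proof.
have [->|lam_neq0] := eqVneq lam 0.
  rewrite !mul0r !addr0 => _ c_eq0; exists (point_mass s1).
  by split; [exact: is_dist_point_mass | rewrite mul0r add0r; lra].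
move=> lam_ge0 /andP[le1 le2].
have lam_gt0 : 0 < lam by rewrite lt_def lam_neq0.
have [|p [p_dist p_mean]] := @exists_dist_mean S f s1 s2 (- c / lam).
  by rewrite ler_pdivlMr // ler_pdivrMr //; apply/andP; split; lra.
by exists p; split => //; rewrite p_mean mulrC divfK // addNr.
Qed.

End Means.

Section DiscountedSeries.
Variables (R : realType) (lam : R).
Hypotheses (lam_ge0 : 0 <= lam) (lam_lt1 : lam < 1).

Definition discounted (u : nat -> R) (t : nat) : R := (1 - lam) * lam ^+ t * u t.

Lemma cvg_expr_mul_bounded (u : nat -> R) C :
  (forall n, `|u n| <= C) -> (fun n => lam ^+ n * u n) @ \oo --> (0 : R).
Proof.
move=> u_bnd; have lamn_cvg : (fun n => lam ^+ n * C) @ \oo --> (0 : R).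
  by rewrite -(mul0r C); apply: cvgMr_tmp; apply: cvg_expr; rewrite ger0_norm.
apply: (@squeeze_cvgr _ _ _ _ (fun n => - (lam ^+ n * C)) (fun n => lam ^+ n * C)).
- near=> n; have := u_bnd n; rewrite ler_norml -mulrN => /andP[lo hi].
  by apply/andP; split; apply: ler_wpM2l; rewrite ?exprn_ge0.
- by rewrite -oppr0; apply: cvgN.
- exact: lamn_cvg.
Unshelve. all: end_near.
Qed.

Lemma series_discounted_ge (u : nat -> R) a L : (forall t, a <= u t) ->
  series (discounted u) @ \oo --> L -> (1 - lam) * u 0%N + lam * a <= L.
Proof.
move=> u_ge series_cvg.
have partial_ge N :
    (1 - lam) * u 0%N + lam * a - lam ^+ N.+1 * a <= series (discounted u) N.+1.
  elim: N => [|N IH].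
    by rewrite seriesEord /= big_ord1 /discounted expr1 expr0 mulr1 addrK.
  have -> : (1 - lam) * u 0%N + lam * a - lam ^+ N.+2 * a =
      (1 - lam) * u 0%N + lam * a - lam ^+ N.+1 * a + (1 - lam) * lam ^+ N.+1 * a.
    by rewrite exprS; ring.
  rewrite seriesSr lerD // /discounted ler_wpM2l //.
  by rewrite mulr_ge0 ?exprn_ge0 // subr_ge0 (ltW lam_lt1).
have bound_cvg : (fun N => (1 - lam) * u 0%N + lam * a - lam ^+ N.+1 * a) @ \oo -->
    ((1 - lam) * u 0%N + lam * a - 0).
  apply: cvgB; first exact: cvg_cst.
  rewrite -(mul0r a); apply: cvgMr_tmp.
  by rewrite (cvg_shiftS (fun n => lam ^+ n)); apply: cvg_expr; rewrite ger0_norm.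
have shifted_cvg : (fun N => series (discounted u) N.+1) @ \oo --> L.
  by rewrite (cvg_shiftS (series _)).
rewrite -[X in X <= _]subr0; apply: (ler_cvg_to bound_cvg shifted_cvg).
by near=> N; exact: partial_ge.
Unshelve. all: end_near.
Qed.

Lemma series_discounted_le (u : nat -> R) b L : (forall t, u t <= b) ->
  series (discounted u) @ \oo --> L -> L <= (1 - lam) * u 0%N + lam * b.
Proof.
move=> u_le series_cvg; rewrite -lerN2.
have -> : - ((1 - lam) * u 0%N + lam * b) = (1 - lam) * - u 0%N + lam * - b by ring.
apply: (@series_discounted_ge (fun t => - u t)) => [t|]; first by rewrite lerN2.
have -> : discounted (fun t => - u t) = - discounted u.
  by apply/funext => t; rewrite /discounted mulrN.
by rewrite seriesN; exact: cvgN.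
Qed.

Lemma series_discounted_telescope (A B : nat -> R) k C :
  (1 - lam) * A 0%N = - k -> (forall t, lam * A t.+1 + B t = k) ->
  (forall t, `|B t| <= C) ->
  series (discounted (fun t => A t + B t)) @ \oo --> (0 : R).
Proof.
move=> A0 rec B_bnd.
have partial N : series (discounted (fun t => A t + B t)) N.+1 =
    lam ^+ N * (- k + (1 - lam) * B N).
  elim: N => [|N IH].
    by rewrite seriesEord /= big_ord1 /discounted !expr0 -A0; ring.
  by rewrite seriesSr IH /discounted exprS -(rec N); ring.
rewrite -cvg_shiftS /= (funext partial).
apply: (@cvg_expr_mul_bounded _ (`|k| + C)) => N.
apply: le_trans (ler_normD _ _) _; rewrite normrN lerD2l normrM.
rewrite ger0_norm ?subr_ge0 ?(ltW lam_lt1) //; apply: le_trans _ (B_bnd N).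
by rewrite ler_piMl ?normr_ge0 // gerBl.
Qed.

End DiscountedSeries.

Section Rounds.
Variables (R : realType) (SX SY : finType).
Implicit Types (sX : stratX R SX SY) (sY : stratY R SX SY).
Implicit Types (F : (SX -> R) -> (SY -> R) -> R).

Definition round_exp sX sY t F : R :=
  \sum_(h : t.-tuple (SX * SY)) hist_prob sX sY h * F (sX h) (sY h).

Definition shift_stratX (q : SX * SY) sX : stratX R SX SY := fun h => sX (q :: h).
Definition shift_stratY (q : SX * SY) sY : stratY R SX SY := fun h => sY (q :: h).

Lemma hist_prob_cons sX sY t q (h : t.-tuple (SX * SY)) :
  hist_prob sX sY [tuple of q :: h] =
  prod_dist (sX [::]) (sY [::]) q * hist_prob (shift_stratX q sX) (shift_stratY q sY) h.
Proof.
rewrite /hist_prob big_ord_recl; congr (_ * _).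
by apply: eq_bigr => i _; rewrite tnthS.
Qed.

Lemma round_exp0 sX sY F : round_exp sX sY 0 F = F (sX [::]) (sY [::]).
Proof.
rewrite /round_exp (big_pred1 [tuple]) => [|h]; last by rewrite (tuple0 h) /= eqxx.
by rewrite /hist_prob big_ord0 mul1r.
Qed.

Lemma round_expS sX sY t F : round_exp sX sY t.+1 F =
  mean (prod_dist (sX [::]) (sY [::]))
    (fun q => round_exp (shift_stratX q sX) (shift_stratY q sY) t F).
Proof.
rewrite /round_exp sum_tuple_cons; apply: eq_bigr => q _.
by rewrite big_distrr /=; apply: eq_bigr => h _; rewrite hist_prob_cons mulrA.
Qed.

Lemma round_exp_bound sX sY t F lo hi : is_stratX sX -> is_stratY sY ->
  (forall h, lo <= F (sX h) (sY h) <= hi) -> lo <= round_exp sX sY t F <= hi.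
Proof.
elim: t sX sY => [|t IH] sX sY sX_strat sY_strat F_bnd; first by rewrite round_exp0.
rewrite round_expS; apply: mean_bound => [|q]; first exact: is_dist_prod.
by apply: IH => h; [exact: sX_strat | exact: sY_strat | exact: F_bnd].
Qed.

Lemma stage_exp_additive phiX phiY (phi : SX -> SY -> R) sX sY t :
  (forall x y, phi x y = phiX x + phiY y) -> is_stratX sX -> is_stratY sY ->
  stage_exp sX sY phi t =
  round_exp sX sY t (fun p _ => mean p phiX) + round_exp sX sY t (fun _ q => mean q phiY).
Proof.
move=> phiE sX_strat sY_strat; rewrite /stage_exp /round_exp -big_split /=.
apply: eq_bigr => h _; rewrite -mulrDr -mean_prod // -mean_prodE.
by under eq_fun do rewrite phiE.
Qed.

End Rounds.

Section AdditiveGame.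
Variables (R : realType) (SX SY : finType) (lam : R).
Variables (phiX : SX -> R) (phiY : SY -> R) (phi : SX -> SY -> R).
Hypotheses (lam_ge0 : 0 <= lam) (lam_lt1 : lam < 1).
Hypothesis phiE : forall x y, phi x y = phiX x + phiY y.
Implicit Types (sX : stratX R SX SY) (sY : stratY R SX SY).

Definition exp_payX sX sY t := round_exp sX sY t (fun p _ => mean p phiX).
Definition exp_payY sX sY t := round_exp sX sY t (fun _ q => mean q phiY).

Lemma disc_term_additive sX sY : is_stratX sX -> is_stratY sY ->
  disc_term sX sY phi lam = discounted lam (fun t => exp_payX sX sY t + exp_payY sX sY t).
Proof.
by move=> sX_strat sY_strat; apply/funext => t; rewrite /disc_term (stage_exp_additive _ phiE).
Qed.

Lemma autocratic_bounds sX a b y :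
  (forall x, a <= phiX x <= b) -> is_stratX sX -> autocratic phi lam sX ->
  (1 - lam) * mean (sX [::]) phiX + phiY y + lam * a <= 0 <=
  (1 - lam) * mean (sX [::]) phiX + phiY y + lam * b.
Proof.
move=> phiX_bnd sX_strat sX_aut.
pose sY : stratY R SX SY := fun _ => point_mass y.
have sY_strat : is_stratY sY := fun=> is_dist_point_mass y.
have payY_eq t : exp_payY sX sY t = phiY y.
  apply/esym/le_anti; apply: round_exp_bound => // h.
  by rewrite mean_point_mass lexx.
have payX_bnd t : a <= exp_payX sX sY t <= b.
  by apply: round_exp_bound => // h; exact: mean_bound.
have u_lo t : a + phiY y <= exp_payX sX sY t + exp_payY sX sY t.
  by rewrite payY_eq lerD2r; case/andP: (payX_bnd t).
have u_hi t : exp_payX sX sY t + exp_payY sX sY t <= b + phiY y.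
  by rewrite payY_eq lerD2r; case/andP: (payX_bnd t).
have series_cvg := sX_aut sY sY_strat.
rewrite disc_term_additive // in series_cvg.
have := series_discounted_ge lam_ge0 lam_lt1 u_lo series_cvg.
have := series_discounted_le lam_ge0 lam_lt1 u_hi series_cvg.
rewrite /exp_payX round_exp0 payY_eq => hi lo.
apply/andP; split; lra.
Qed.

Lemma is_strat_reactive s0 (s : SY -> SX -> R) :
  is_dist s0 -> (forall y, is_dist (s y)) -> is_stratX (reactive s0 s).
Proof. by move=> s0_dist s_dist [|q h]; [exact: s0_dist | exact: s_dist]. Qed.

Lemma shift_reactive q s0 (s : SY -> SX -> R) :
  shift_stratX q (reactive s0 s) = reactive (s q.2) s.
Proof. by apply/funext => -[|p h]. Qed.

Lemma reactive_exp_payX_succ (s : SY -> SX -> R) k :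
  (forall y, is_dist (s y)) -> (forall y, lam * mean (s y) phiX + phiY y = k) ->
  forall t s0 sY, is_dist s0 -> is_stratY sY ->
  lam * exp_payX (reactive s0 s) sY t.+1 = k - exp_payY (reactive s0 s) sY t.
Proof.
(* Peel off round 0: afterwards the reactive strategy restarts from s y_0. *)
move=> s_dist s_resp t; elim: t => [|t IH] s0 sY s0_dist sY_strat;
  rewrite /exp_payX round_expS -meanZ.
  transitivity (mean (prod_dist s0 (sY [::])) (fun q => k - phiY q.2)).
    by apply: eq_bigr => q _; rewrite round_exp0 -(s_resp q.2) addrK.
  rewrite mean_cstB ?(mean_prod_snd phiY) //; last exact: is_dist_prod.
  by rewrite /exp_payY round_exp0.
transitivity (mean (prod_dist s0 (sY [::])) (fun q =>
  k - exp_payY (shift_stratX q (reactive s0 s)) (shift_stratY q sY) t)).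
  by apply: eq_bigr => q _; rewrite shift_reactive -IH // => h; exact: sY_strat.
by rewrite mean_cstB /exp_payY ?[in RHS]round_expS //; exact: is_dist_prod.
Qed.

Lemma reactive_autocratic s0 (s : SY -> SX -> R) :
  is_dist s0 -> (forall y, is_dist (s y)) ->
  (forall y, lam * mean (s y) phiX + phiY y = - ((1 - lam) * mean s0 phiX)) ->
  autocratic phi lam (reactive s0 s).
Proof.
move=> s0_dist s_dist s_resp sY sY_strat.
rewrite disc_term_additive //; last exact: is_strat_reactive.
apply: (series_discounted_telescope lam_ge0 lam_lt1 (k := - ((1 - lam) * mean s0 phiX))
    (C := \sum_y `|phiY y|)).
- by rewrite /exp_payX round_exp0 opprK.
- by move=> t; rewrite (reactive_exp_payX_succ s_dist s_resp) // subrK.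
- move=> t; rewrite ler_norml; apply: round_exp_bound => //.
    exact: is_strat_reactive.
  move=> h; apply: mean_bound => // y; rewrite -ler_norml.
  by rewrite (bigD1 y) //= lerDl sumr_ge0.
Qed.

End AdditiveGame.

Theorem theorem2 (R : realType) (SX SY : finType)
  (lam : R) (phi : SX -> SY -> R) :
  (0 < #|SX|)%N -> (0 < #|SY|)%N ->
  0 <= lam -> lam < 1 ->
  additive_game phi ->
  enforceable phi lam ->
  exists (s0 : SX -> R) (s : SY -> SX -> R),
    is_dist s0 /\ (forall y, is_dist (s y)) /\
    autocratic phi lam (reactive s0 s).
Proof.
move=> /card_gt0P[x0 _] _ lam_ge0 lam_lt1 [phiX [phiY phiE]] [sX [sX_strat sX_aut]].
have [xmin _ min_le] := @arg_minP _ _ SX x0 predT phiX isT.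
have [xmax _ max_ge] := @arg_maxP _ _ SX x0 predT phiX isT.
have phiX_bnd x : phiX xmin <= phiX x <= phiX xmax.
  by apply/andP; split; [exact: min_le | exact: max_ge].
pose k := - ((1 - lam) * mean (sX [::]) phiX).
have /choice[s s_resp] y : exists p, is_dist p /\ lam * mean p phiX + phiY y = k.
  have := autocratic_bounds lam_ge0 lam_lt1 phiE y phiX_bnd sX_strat sX_aut.
  case/(exists_dist_affine_root lam_ge0) => p [p_dist p_root].
  by exists p; split; [|rewrite /k; lra].
exists (sX [::]), s; split; first exact: sX_strat.
split=> [y|]; first by case: (s_resp y).
by apply: reactive_autocratic => // y; case: (s_resp y).
Qed.
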